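(* Let $Q$ be a quiver, $\theta\in\mathbb{Z}^{Q_0}$, and $\mathbf{l},\mathbf{u}\in\mathbb{Z}_{\ge0}^{Q_1}$. Then there exist a quiver $Q'$ with no oriented cycles and a weight $\theta'\in\mathbb{Z}^{Q'_0}$ such that the flow polytope $\nabla(Q,\theta,\mathbf{l},\mathbf{u})$ and the quiver polytope $\nabla(Q',\theta')$ are integral-affinely equivalent.
   Context: A quiver $Q$: vertices $Q_0$, arrows $Q_1$, $a$ from $a^-$ to $a^+$. The flow polytope is $\nabla(Q,\theta,\mathbf{l},\mathbf{u})=\{x\in\mathbb{R}^{Q_1}\mid \mathbf{l}\le x\le\mathbf{u},\ \forall v\in Q_0:\ \theta(v)=\sum_{a^+=v}x(a)-\sum_{a^-=v}x(a)\}$ and $\nabla(Q',\theta')=\{x\in\mathbb{R}^{Q'_1}\mid 0\le x,\ \forall v\in Q'_0:\ \theta'(v)=\sum_{a^+=v}x(a)-\sum_{a^-=v}x(a)\}$. Lattice polyhedra $\nabla_i\subset V_i$ with lattices $M_i\subset V_i$ (here $\mathbb{Z}^{Q_1}$ and $\mathbb{Z}^{Q'_1}$) are integral-affinely equivalent if there is an affine linear isomorphism $\varphi:\mathrm{AffSpan}(\nabla_1)\to\mathrm{AffSpan}(\nabla_2)$ mapping $\mathrm{AffSpan}(\nabla_1)\cap M_1$ onto $\mathrm{AffSpan}(\nabla_2)\cap M_2$ and $\nabla_1$ onto $\nabla_2$. *)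

From HB Require Import structures.
From mathcomp Require Import all_boot all_order all_algebra.
From mathcomp Require Import reals.
Set Implicit Arguments. Unset Strict Implicit. Unset Printing Implicit Defensive.
Import Order.TTheory GRing.Theory Num.Theory.
Local Open Scope ring_scope.

(* A finite quiver: vertices 'I_nv, arrows 'I_na, arrow a goes from
   qsrc a (= a^-) to qtgt a (= a^+). *)
Record quiver := Quiver {
  nv : nat;
  na : nat;
  qsrc : 'I_na -> 'I_nv;
  qtgt : 'I_na -> 'I_nv }.

Definition no_oriented_cycle (Q : quiver) : Prop :=
  forall c : seq 'I_(na Q), c != [::] ->
    ~~ cycle (fun a b => qtgt a == qsrc b) c.

Definition flow_cond (R : realType) (Q : quiver) (theta : 'I_(nv Q) -> int)
    (x : 'I_(na Q) -> R) : Prop :=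
  forall v : 'I_(nv Q),
    (theta v)%:~R = \sum_(a | qtgt a == v) x a - \sum_(a | qsrc a == v) x a.

Definition flow_polytope (R : realType) (Q : quiver) (theta : 'I_(nv Q) -> int)
    (l u : 'I_(na Q) -> nat) (x : 'I_(na Q) -> R) : Prop :=
  (forall a, (l a)%:R <= x a <= (u a)%:R) /\ flow_cond theta x.

Definition quiver_polytope (R : realType) (Q : quiver) (theta : 'I_(nv Q) -> int)
    (x : 'I_(na Q) -> R) : Prop :=
  (forall a, 0 <= x a) /\ flow_cond theta x.

Definition aff_span (R : realType) (n : nat) (S : ('I_n -> R) -> Prop)
    (x : 'I_n -> R) : Prop :=
  exists (k : nat) (p : 'I_k -> 'I_n -> R) (c : 'I_k -> R),
    (forall i, S (p i)) /\ \sum_(i < k) c i = 1 /\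
    forall j, x j = \sum_(i < k) c i * p i j.

Definition lattice_pt (R : realType) (n : nat) (x : 'I_n -> R) : Prop :=
  forall j, x j \is a Num.int.

Definition affine_map (R : realType) (n m : nat) (M : 'I_m -> 'I_n -> R)
    (b : 'I_m -> R) (x : 'I_n -> R) : 'I_m -> R :=
  fun j => \sum_(i < n) M j i * x i + b j.

Definition maps_onto (X Y : Type) (f : X -> Y) (A : X -> Prop) (B : Y -> Prop) :=
  forall y, B y <-> exists2 x, A x & f x = y.

(* Integral-affine equivalence of lattice polyhedra P1 in R^n1 (lattice Z^n1)
   and P2 in R^n2 (lattice Z^n2): an affine-linear isomorphism
   AffSpan(P1) -> AffSpan(P2) (every affine map on an affine subspace is the
   restriction of a global affine map x |-> M x + b) that maps
   AffSpan(P1) cap Z^n1 onto AffSpan(P2) cap Z^n2, and P1 onto P2. *)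
Definition int_aff_equiv (R : realType) (n1 n2 : nat)
    (P1 : ('I_n1 -> R) -> Prop) (P2 : ('I_n2 -> R) -> Prop) : Prop :=
  exists (M : 'I_n2 -> 'I_n1 -> R) (b : 'I_n2 -> R),
    let phi := affine_map M b in
    (forall x y, aff_span P1 x -> aff_span P1 y -> phi x = phi y -> x = y) /\
    maps_onto phi (aff_span P1) (aff_span P2) /\
    maps_onto phi (fun x => aff_span P1 x /\ lattice_pt x)
                  (fun y => aff_span P2 y /\ lattice_pt y) /\
    maps_onto phi P1 P2.

(* Put y_a^- = x_a - l_a and y_a^+ = u_a - x_a.  These are the flows on the
   quiver obtained from Q by adding a vertex [a] for each arrow a together with
   the two arrows a^- -> [a] and a^+ -> [a]: the flow condition at [a] says
   y_a^- + y_a^+ = u_a - l_a, the one at an old vertex v is the flow condition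
   of Q at v shifted by a constant, and the bounds l <= x <= u become y >= 0.
   Every arrow ends at a new vertex, from which no arrow starts, so the new
   quiver has no oriented cycles.  The map x |-> y is affine and integral, with
   the integral affine inverse y |-> y^- + l. *)
From mathcomp Require Import all_boot all_order all_algebra.
From mathcomp Require Import reals.
From mathcomp Require Import ring lra.
From Stdlib Require Import FunctionalExtensionality.
Set Implicit Arguments. Unset Strict Implicit. Unset Printing Implicit Defensive.
Import Order.TTheory GRing.Theory Num.Theory.
Local Open Scope ring_scope.

Lemma split_lshift m n (i : 'I_m) : split (lshift n i) = inl i.
Proof. exact: (unsplitK (inl _ i)). Qed.

Lemma split_rshift m n (j : 'I_n) : split (rshift m j) = inr j.
Proof. exact: (unsplitK (inr _ j)). Qed.

Lemma sum_delta (V : pzSemiRingType) (I : finType) (F : I -> V) (a : I) :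
  \sum_i (a == i)%:R * F i = F a.
Proof.
rewrite (bigD1 a) //= eqxx mul1r big1 ?addr0 // => i /negbTE.
by rewrite eq_sym => ->; rewrite mul0r.
Qed.

Section AffineEquivalence.
Variable R : realType.

Definition preserves_affine_comb n1 n2 (f : ('I_n1 -> R) -> 'I_n2 -> R) :=
  forall k (p : 'I_k -> 'I_n1 -> R) (c : 'I_k -> R), \sum_(i < k) c i = 1 ->
    f (fun j => \sum_(i < k) c i * p i j) = fun j => \sum_(i < k) c i * f (p i) j.

Lemma affine_map_comb n m (M : 'I_m -> 'I_n -> R) b :
  preserves_affine_comb (affine_map M b).
Proof.
move=> k p c hc; apply: functional_extensionality => j; rewrite /affine_map.
under [RHS]eq_bigr => i _ do rewrite mulrDr mulr_sumr.
rewrite big_split /= -mulr_suml hc mul1r; congr (_ + _).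
rewrite exchange_big /=; apply: eq_bigr => i _.
rewrite mulr_sumr; apply: eq_bigr => i' _; ring.
Qed.

Lemma preserves_affine_comb_comp n1 n2 n3 (f : ('I_n2 -> R) -> 'I_n3 -> R)
    (g : ('I_n1 -> R) -> 'I_n2 -> R) :
  preserves_affine_comb f -> preserves_affine_comb g ->
  preserves_affine_comb (f \o g).
Proof. by move=> hf hg k p c hc /=; rewrite hg // hf. Qed.

Lemma aff_span_map n1 n2 (f : ('I_n1 -> R) -> 'I_n2 -> R)
    (P1 : ('I_n1 -> R) -> Prop) (P2 : ('I_n2 -> R) -> Prop) :
  preserves_affine_comb f -> (forall x, P1 x -> P2 (f x)) ->
  forall x, aff_span P1 x -> aff_span P2 (f x).
Proof.
move=> hf hP x [k [p [c [Hp [Hc Hx]]]]].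
rewrite (functional_extensionality _ _ Hx) hf //.
by exists k, (fun i => f (p i)), c; split=> // i; apply: hP.
Qed.

Lemma aff_span_fixed n (f : ('I_n -> R) -> 'I_n -> R) (P : ('I_n -> R) -> Prop) :
  preserves_affine_comb f -> (forall y, P y -> f y = y) ->
  forall y, aff_span P y -> f y = y.
Proof.
move=> hf hP y [k [p [c [Hp [Hc Hy]]]]].
rewrite (functional_extensionality _ _ Hy) hf //.
by apply: functional_extensionality => j; apply: eq_bigr => i _; rewrite hP.
Qed.

Lemma int_aff_equiv_of_retraction n1 n2 (P1 : ('I_n1 -> R) -> Prop)
    (P2 : ('I_n2 -> R) -> Prop) (M : 'I_n2 -> 'I_n1 -> R) b
    (psi : ('I_n2 -> R) -> 'I_n1 -> R) :
  let phi := affine_map M b in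
  preserves_affine_comb psi -> cancel phi psi ->
  (forall x, P1 x -> P2 (phi x)) -> (forall y, P2 y -> P1 (psi y)) ->
  (forall y, P2 y -> phi (psi y) = y) ->
  (forall x, lattice_pt x -> lattice_pt (phi x)) ->
  (forall y, lattice_pt y -> lattice_pt (psi y)) ->
  int_aff_equiv P1 P2.
Proof.
move=> phi psi_comb phiK phiP1 psiP2 psiK phi_lat psi_lat.
have phi_span := aff_span_map (affine_map_comb M b) phiP1.
have psi_span := aff_span_map psi_comb psiP2.
have psiK_span : forall y, aff_span P2 y -> phi (psi y) = y.
  exact: aff_span_fixed
    (preserves_affine_comb_comp (affine_map_comb M b) psi_comb) psiK.
exists M, b; split; last split; last split.
- by move=> x y _ _; apply: (can_inj phiK).
- move=> y; split; last by move=> [x hx <-]; apply: phi_span.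
  by move=> hy; exists (psi y); [apply: psi_span | apply: psiK_span].
- move=> y; split.
    move=> [hy ly]; exists (psi y); last exact: psiK_span.
    by split; [apply: psi_span | apply: psi_lat].
  by move=> [x [hx lx] <-]; split; [apply: phi_span | apply: phi_lat].
- move=> y; split; first by move=> hy; exists (psi y); [apply: psiP2 | apply: psiK].
  by move=> [x hx <-]; apply: phiP1.
Qed.

End AffineEquivalence.

Section ArrowSinkQuiver.
Variables (Q : quiver) (theta : 'I_(nv Q) -> int) (l u : 'I_(na Q) -> nat).
Local Notation n := (nv Q).
Local Notation m := (na Q).

(* Vertices 'I_(n + m): the old vertices, then one new vertex per arrow.
   Arrows 'I_(m + m): lshift a is a^- -> [a], rshift a is a^+ -> [a]. *)
Definition arrow_sink_quiver : quiver :=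
  Quiver (fun k : 'I_(m + m) => match split k with
            | inl a => lshift m (qsrc a) | inr a => lshift m (qtgt a) end)
         (fun k => rshift n (match split k with inl a => a | inr a => a end)).

Definition arrow_sink_weight (v : 'I_(n + m)) : int :=
  match split v with
  | inl v => theta v + (\sum_(a | qsrc a == v) l a)%N%:Z
                     - (\sum_(a | qtgt a == v) u a)%N%:Z
  | inr a => (u a)%:Z - (l a)%:Z
  end.

Local Notation Q' := arrow_sink_quiver.
Local Notation theta' := arrow_sink_weight.

Lemma arrow_sink_quiver_acyclic : no_oriented_cycle Q'.
Proof.
move=> [|a c] // _; rewrite /cycle /=.
by case: c => [|b c] /=; [case: (split a) | case: (split b)] => ?;
  rewrite eq_sym eq_lrshift.
Qed.

Variable R : realType.
Implicit Types (x : 'I_m -> R) (y : 'I_(m + m) -> R) (a : 'I_m) (v : 'I_n).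

Lemma sum_in_arrow_vertex y a :
  \sum_(k | qtgt (q := Q') k == rshift n a) y k = y (lshift m a) + y (rshift m a).
Proof.
rewrite big_split_ord /=.
under eq_bigl => k do rewrite split_lshift eq_rshift.
under [X in _ + X]eq_bigl => k do rewrite split_rshift eq_rshift.
by rewrite !big_pred1_eq.
Qed.

Lemma sum_out_arrow_vertex y a :
  \sum_(k | qsrc (q := Q') k == rshift n a) y k = 0.
Proof. by rewrite big1 // => k; rewrite /=; case: split => b; rewrite eq_lrshift. Qed.

Lemma sum_in_old_vertex y v : \sum_(k | qtgt (q := Q') k == lshift m v) y k = 0.
Proof. by rewrite big1 // => k; rewrite /= eq_rlshift. Qed.

Lemma sum_out_old_vertex y v :
  \sum_(k | qsrc (q := Q') k == lshift m v) y k =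
  \sum_(a | qsrc a == v) y (lshift m a) + \sum_(a | qtgt a == v) y (rshift m a).
Proof.
rewrite big_split_ord /=.
under eq_bigl => k do rewrite split_lshift eq_lshift.
by under [X in _ + X]eq_bigl => k do rewrite split_rshift eq_lshift.
Qed.

Lemma flow_cond_arrow_vertex y a : flow_cond (Q := Q') theta' y ->
  y (rshift m a) = (u a)%:R - (l a)%:R - y (lshift m a).
Proof.
move=> /(_ (rshift n a)); rewrite /theta' split_rshift.
rewrite sum_in_arrow_vertex sum_out_arrow_vertex intrB -!pmulrn; lra.
Qed.

Definition slack_matrix (k : 'I_(m + m)) (i : 'I_m) : R :=
  match split k with inl a => (a == i)%:R | inr a => - (a == i)%:R end.

Definition slack_offset (k : 'I_(m + m)) : R :=
  match split k with inl a => - (l a)%:R | inr a => (u a)%:R end.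

Local Notation slack := (affine_map slack_matrix slack_offset).

Lemma slack_lshift x a : slack x (lshift m a) = x a - (l a)%:R.
Proof.
by rewrite /affine_map /slack_matrix /slack_offset split_lshift sum_delta.
Qed.

Lemma slack_rshift x a : slack x (rshift m a) = (u a)%:R - x a.
Proof.
rewrite /affine_map /slack_matrix /slack_offset split_rshift.
under eq_bigr => i _ do rewrite mulNr.
by rewrite sumrN sum_delta addrC.
Qed.

Lemma slack_net_flow_old_vertex x v :
  \sum_(k | qtgt (q := Q') k == lshift m v) slack x k
    - \sum_(k | qsrc (q := Q') k == lshift m v) slack x k
    - (theta' (lshift m v))%:~R =
  \sum_(a | qtgt a == v) x a - \sum_(a | qsrc a == v) x a - (theta v)%:~R.
Proof.
rewrite /theta' split_lshift sum_in_old_vertex sum_out_old_vertex.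
rewrite (eq_bigr _ (fun a _ => slack_lshift x a)).
rewrite (eq_bigr _ (fun a _ => slack_rshift x a)).
rewrite !intrB !intrD -!pmulrn !natr_sum !sumrB; lra.
Qed.

Lemma flow_cond_slack x :
  flow_cond (Q := Q') theta' (slack x) <-> flow_cond theta x.
Proof.
split=> H v.
  by have := slack_net_flow_old_vertex x v; have := H (lshift m v); lra.
case: (split_ordP v) => [w|a] ->.
  by have := slack_net_flow_old_vertex x w; have := H w; lra.
rewrite /theta' split_rshift sum_in_arrow_vertex sum_out_arrow_vertex.
rewrite slack_lshift slack_rshift intrB -!pmulrn; lra.
Qed.

Lemma slack_polytope x :
  flow_polytope theta l u x -> quiver_polytope (Q := Q') theta' (slack x).
Proof.
move=> [Hb Hf]; split; last by rewrite flow_cond_slack.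
move=> k; case: (split_ordP k) => a -> {k}; have /andP [hl hu] := Hb a.
  by rewrite slack_lshift subr_ge0.
by rewrite slack_rshift subr_ge0.
Qed.

Lemma slack_lattice x : lattice_pt x -> lattice_pt (slack x).
Proof.
move=> Hx k; case: (split_ordP k) => a -> {k}.
  by rewrite slack_lshift rpredB // natr_int.
by rewrite slack_rshift rpredB // natr_int.
Qed.

Definition unslack y (a : 'I_m) : R := y (lshift m a) + (l a)%:R.

Lemma unslack_comb : preserves_affine_comb unslack.
Proof.
move=> k p c hc; apply: functional_extensionality => a; rewrite /unslack.
under [RHS]eq_bigr => i _ do rewrite mulrDr.
by rewrite big_split /= -mulr_suml hc mul1r.
Qed.

Lemma slackK : cancel slack unslack.
Proof.
move=> x; apply: functional_extensionality => a.
by rewrite /unslack slack_lshift subrK.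
Qed.

Lemma unslackK y : flow_cond (Q := Q') theta' y -> slack (unslack y) = y.
Proof.
move=> Hf; apply: functional_extensionality => k.
case: (split_ordP k) => a -> {k}; first by rewrite slack_lshift /unslack addrK.
rewrite slack_rshift /unslack (flow_cond_arrow_vertex a Hf); lra.
Qed.

Lemma unslack_polytope y :
  quiver_polytope (Q := Q') theta' y -> flow_polytope theta l u (unslack y).
Proof.
move=> [Hnn Hf]; split; last by rewrite -flow_cond_slack unslackK.
move=> a; have := Hnn (lshift m a); have := Hnn (rshift m a).
rewrite (flow_cond_arrow_vertex a Hf) /unslack => h1 h2; apply/andP; split; lra.
Qed.

Lemma unslack_lattice y : lattice_pt y -> lattice_pt (unslack y).
Proof. by move=> Hy a; rewrite /unslack rpredD // natr_int. Qed.

End ArrowSinkQuiver.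

Theorem proposition2p2 (R : realType) (Q : quiver) (theta : 'I_(nv Q) -> int)
    (l u : 'I_(na Q) -> nat) :
  exists (Q' : quiver) (theta' : 'I_(nv Q') -> int),
    no_oriented_cycle Q' /\
    int_aff_equiv (flow_polytope theta l u) (quiver_polytope (R := R) theta').
Proof.
exists (arrow_sink_quiver Q), (arrow_sink_weight theta l u).
split; first exact: arrow_sink_quiver_acyclic.
apply: (int_aff_equiv_of_retraction (unslack_comb l (R := R))
                                    (slackK l u (R := R))).
- exact: slack_polytope.
- exact: unslack_polytope.
- by move=> y [_]; apply: unslackK.
- exact: slack_lattice.
- exact: unslack_lattice.
Qed.
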